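(* Let $m\ge1$ and let $P_1\ge\dots\ge P_{2^m}>0$ be the probabilities of i.i.d. input words $\mathbf{w}_1,\dots,\mathbf{w}_{2^m}$, and $P_1^d\ge\dots\ge P^d_{2^m}>0$. After $t$ data words, let $\mathbf{n}^e(t)=(n_1^e(t),\dots,n^e_{2^m}(t))$ be the vector of counts of the input words, so that $$P(\mathbf{n}^e(t))=\binom{t}{n^e_1(t),\ldots,n^e_{2^m}(t)}P_1^{n^e_1(t)}\cdots P_{2^m}^{n^e_{2^m}(t)},$$ and assume the first $t$ words are encoded and decoded correctly, so the decoder counts equal $\mathbf{n}^e(t)$. Call a count vector stable if $n^e_1(t)>n^e_2(t)>\dots>n^e_{2^m}(t)$. For a stable count vector $\mathbf{n}$, with $N_i=n_i-n_{i+1}$, define $$A(\mathbf{n})=4-\prod_{i=1}^{2^{m-1}}\left(1-\left(\tfrac{P_{2i}}{P_{2i-1}}\right)^{N_{2i-1}}\right)-\prod_{i=1}^{2^{m-1}-1}\left(1-\left(\tfrac{P_{2i+1}}{P_{2i}}\right)^{N_{2i}}\right)-\prod_{i=1}^{2^{m-1}}\left(1-\left(\tfrac{P^d_{2i}}{P^d_{2i-1}}\right)^{N_{2i-1}}\right)-\prod_{i=1}^{2^{m-1}-1}\left(1-\left(\tfrac{P^d_{2i+1}}{P^d_{2i}}\right)^{N_{2i}}\right).$$ Assume that, conditioned on a stable count vector $\mathbf{n}^e(t)=\mathbf{n}$, the probability that a recurrence (two adjacent encoder counts, or two adjacent decoder counts, becoming equal at some future time) occurs is at most $A(\mathbf{n})$.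 Let $P(t)$ be the probability that the dictionary will be unstable, i.e. that $\mathbf{n}^e(t)$ is not stable or a recurrence occurs after time $t$. Then $$P(t)\le\sum_{\mathbf{n}^e(t)\ \text{stable}}A(\mathbf{n}^e(t))P(\mathbf{n}^e(t))+\sum_{\mathbf{n}^e(t)\ \text{not stable}}P(\mathbf{n}^e(t)).$$
   Context: Setting: a rate-1 SLC direct shaping code with parsing length $m$: the encoder keeps the $2^m$ input words ordered by their occurrence counts and maps the word in position $k$ to the $k$th output codeword of a fixed list ordered by nondecreasing cost (number of zeros); the decoder rebuilds the same ordering from the decoded words. Codewords pass through a binary symmetric channel with crossover probability $\rho$, and $P_i^d=\sum_j\rho^{d(i,j)}(1-\rho)^{m-d(i,j)}P_j$ with $d$ the Hamming distance. The conditional bound by $A(\mathbf{n})$ is the paper's Lemma on recurrence of a stable dictionary, stated here as a hypothesis. *)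

From HB Require Import structures.
From mathcomp Require Import all_boot all_order all_algebra.
From mathcomp Require Import all_classical all_reals all_analysis.

Set Implicit Arguments.
Unset Strict Implicit.
Unset Printing Implicit Defensive.

Import Order.TTheory GRing.Theory Num.Theory.
Local Open Scope ring_scope.

(* Input words are indexed 0-based: word index j (0 <= j < 2^m) corresponds to
   the paper's index j+1.  Probabilities are given as functions nat -> R
   (only values at j < 2^m matter). *)

Definition wcount (M : nat) (w : nat -> 'I_M) (t j : nat) : nat :=
  count (fun k => nat_of_ord (w k) == j) (iota 0 t).

Definition ecount (T : Type) (M : nat) (w : nat -> T -> 'I_M) (s : nat) (x : T)
  : nat -> nat := fun j => wcount (fun k => w k x) s j.

Definition stable (M : nat) (q : nat -> nat) : bool :=
  all (fun j => (q j.+1 < q j)%N) (iota 0 M.-1).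

Definition Aterm (R : realFieldType) (p : nat -> R) (q : nat -> nat) (j : nat) : R :=
  1 - (p j.+1 / p j) ^+ (q j - q j.+1)%N.

Definition Abound (R : realFieldType) (m : nat) (p pd : nat -> R) (q : nat -> nat) : R :=
  4 - \prod_(i < (2 ^ m.-1)%N) Aterm p q (2 * i)%N
    - \prod_(i < (2 ^ m.-1 - 1)%N) Aterm p q (2 * i).+1
    - \prod_(i < (2 ^ m.-1)%N) Aterm pd q (2 * i)%N
    - \prod_(i < (2 ^ m.-1 - 1)%N) Aterm pd q (2 * i).+1.

Definition fnat (M t : nat) (n : {ffun 'I_M -> 'I_t.+1}) : nat -> nat :=
  fun j => nth 0%N [seq nat_of_ord (n i) | i <- enum 'I_M] j.

Definition multprob (R : realFieldType) (M t : nat) (p : nat -> R)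
  (n : {ffun 'I_M -> 'I_t.+1}) : R :=
  (t`!)%:R / (\prod_(i < M) (n i)`!)%:R * \prod_(i < M) p i ^+ n i.

Definition hdist (a b : seq bool) : nat :=
  count id [seq xy.1 != xy.2 | xy <- zip a b].
Definition cost (a : seq bool) : nat := count negb a.

Definition Pdec (R : realFieldType) (m M : nat) (rho : R)
  (c : 'I_M -> m.-tuple bool) (p : nat -> R) : nat -> R :=
  fun j => \sum_(i < M | nat_of_ord i == j)
     \sum_(k < M) rho ^+ hdist (c i) (c k)
                   * (1 - rho) ^+ (m - hdist (c i) (c k))%N * p k.

Definition countev (T : Type) (M t : nat) (w : nat -> T -> 'I_M)
  (n : {ffun 'I_M -> 'I_t.+1}) : set T :=
  [set x | forall i : 'I_M, ecount w t x i = n i].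

Definition recurrence (T : Type) (M : nat) (w wd : nat -> T -> 'I_M) (t : nat)
  : set T :=
  [set x | exists s, (t < s)%N /\ exists j, (j.+1 < M)%N /\
      (ecount w s x j = ecount w s x j.+1 \/ ecount wd s x j = ecount wd s x j.+1)].

From HB Require Import structures.
From mathcomp Require Import all_boot all_order all_algebra.
From mathcomp Require Import all_classical all_reals all_analysis.

(* The unstable event is the disjoint union, over the count vectors n with
   total t, of the event {n^e(t) = n} when n is not stable and of its
   intersection with the recurrence event when n is stable.  By additivity it
   suffices to bound each piece: the recurrence hypothesis handles the stable
   ones, and P(n^e(t) = n) is the multinomial probability P(n) because the
   t-word sequences of type n are t!/prod_i n_i! many, each of probability
   prod_i P_i^{n_i}.  The hypotheses on the code, the channel and the ordering
   of the probabilities only matter through the recurrence bound A(n), so the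
   proof does not use them. *)

Set Implicit Arguments.
Unset Strict Implicit.
Unset Printing Implicit Defensive.

Import Order.TTheory GRing.Theory Num.Theory.
Local Open Scope ring_scope.
Local Open Scope classical_set_scope.

Section word_sequences.
Context (M : nat).

Definition occurrences s (f : {ffun 'I_s -> 'I_M}) (j : nat) : nat :=
  #|[pred l | f l == j :> nat]|.

Definition type_class s (n : 'I_M -> nat) : pred {ffun 'I_s -> 'I_M} :=
  [pred f | [forall i : 'I_M, occurrences f i == n i]].
#[global] Arguments type_class : clear implicits.

Definition rcons_ffun s (g : {ffun 'I_s -> 'I_M}) (a : 'I_M)
  : {ffun 'I_s.+1 -> 'I_M} :=
  [ffun l => if unlift ord_max l is Some l' then g l' else a].

Lemma rcons_ffun_lift s (g : {ffun 'I_s -> 'I_M}) a l :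
  rcons_ffun g a (lift ord_max l) = g l.
Proof. by rewrite ffunE liftK. Qed.

Lemma rcons_ffun_widen s (g : {ffun 'I_s -> 'I_M}) a l :
  rcons_ffun g a (widen_ord (leqnSn s) l) = g l.
Proof.
have -> : widen_ord (leqnSn s) l = lift ord_max l.
  by apply: val_inj; rewrite /= /bump leqNgt ltn_ord.
exact: rcons_ffun_lift.
Qed.

Lemma rcons_ffun_max s (g : {ffun 'I_s -> 'I_M}) a : rcons_ffun g a ord_max = a.
Proof. by rewrite ffunE unlift_none. Qed.

Lemma big_ffun_rcons (R : Type) (idx : R) (op : Monoid.com_law idx) s
    (F : {ffun 'I_s.+1 -> 'I_M} -> R) :
  \big[op/idx]_f F f = \big[op/idx]_g \big[op/idx]_a F (rcons_ffun g a).
Proof.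
rewrite pair_big (reindex (fun ga => rcons_ffun ga.1 ga.2)) //.
apply: onW_bij.
exists (fun f : {ffun 'I_s.+1 -> 'I_M} => ([ffun l => f (lift ord_max l)], f ord_max)).
  move=> [g a] /=; rewrite rcons_ffun_max; congr (_, _).
  by apply/ffunP => l; rewrite ffunE rcons_ffun_lift.
move=> f; apply/ffunP => l; rewrite ffunE.
by case: unliftP => [l' ->|->]; rewrite ?ffunE.
Qed.

Lemma occurrences_rcons s (g : {ffun 'I_s -> 'I_M}) a j :
  occurrences (rcons_ffun g a) j = (occurrences g j + (a == j :> nat))%N.
Proof.
rewrite /occurrences -!sum1_card big_mkcond [in RHS]big_mkcond big_ord_recr /=.
rewrite inE rcons_ffun_max; congr (_ + _)%N.
by apply: eq_bigr => l _; rewrite !inE rcons_ffun_widen.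
Qed.

Lemma sum_occurrences s (f : {ffun 'I_s -> 'I_M}) :
  (\sum_(i < M) occurrences f i)%N = s.
Proof.
rewrite -[RHS]card_ord -sum1_card (partition_big f predT) //=.
by apply: eq_bigr => i _; rewrite sum1_card.
Qed.

Definition decr_at (n : 'I_M -> nat) (a : 'I_M) (i : 'I_M) : nat := (n i - (a == i))%N.

Lemma decr_at_eq n a : decr_at n a a = (n a).-1.
Proof. by rewrite /decr_at eqxx subn1. Qed.

Lemma decr_at_neq n a i : i != a -> decr_at n a i = n i.
Proof. by rewrite /decr_at eq_sym => /negPf ->; rewrite subn0. Qed.

Lemma type_class_rcons s n (g : {ffun 'I_s -> 'I_M}) a :
  (rcons_ffun g a \in type_class s.+1 n) =
  (0 < n a)%N && (g \in type_class s (decr_at n a)).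
Proof.
rewrite !inE /decr_at; apply/forallP/andP => [h|[na /forallP h] i].
  split; first by move/eqP: (h a); rewrite occurrences_rcons eqxx addn1 => <-.
  apply/forallP => i; move/eqP: (h i).
  by rewrite occurrences_rcons => <-; rewrite addnK.
rewrite occurrences_rcons (eqP (h i)).
case: (a =P i) => [<-|/eqP ai]; first by rewrite eqxx subnK.
by rewrite (negbTE (ai : val a != val i)) subn0 addn0.
Qed.

Lemma card_type_class_rcons s n :
  #|type_class s.+1 n| = (\sum_(a | 0 < n a) #|type_class s (decr_at n a)|)%N.
Proof.
rewrite -sum1_card big_mkcond big_ffun_rcons exchange_big [RHS]big_mkcond.
apply: eq_bigr => a _ /=; under eq_bigr do rewrite type_class_rcons.
case: posnP => _ /=; first by rewrite big1.
by rewrite -sum1_card [RHS]big_mkcond.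
Qed.

Lemma prod_fact_decr_at n a : (0 < n a)%N ->
  (\prod_i (n i)`! = (\prod_i (decr_at n a i)`!) * n a)%N.
Proof.
move=> na; rewrite (bigD1 a) // [in RHS](bigD1 a) //= decr_at_eq.
rewrite (eq_bigr (fun i => (n i)`!)
  (fun i (ia : i != a) => congr1 _ (decr_at_neq n ia))).
by case: (n a) na => // k _; rewrite factS [RHS]mulnC mulnA.
Qed.

Lemma sum_decr_at n a : (0 < n a)%N ->
  (\sum_i n i = (\sum_i decr_at n a i).+1)%N.
Proof.
move=> na; rewrite (bigD1 a) // [in RHS](bigD1 a) //= decr_at_eq.
rewrite (eq_bigr n (fun i (ia : i != a) => decr_at_neq n ia)).
by case: (n a) na.
Qed.

Lemma card_type_class s n : (\sum_i n i)%N = s ->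
  (#|type_class s n| * \prod_i (n i)`! = s`!)%N.
Proof.
elim: s n => [|s IH] n sn.
  have n0 i : n i = 0%N by apply/eqP; rewrite -leqn0 -sn (bigD1 i) //= leq_addr.
  rewrite big1 => [|i _]; last by rewrite n0.
  rewrite muln1 (eq_card (B := predT)) ?card_ffun ?card_ord //.
  move=> f; rewrite !inE; apply/forallP => i.
  by rewrite n0; apply/eqP/eq_card0 => -[].
rewrite card_type_class_rcons big_distrl /=.
rewrite (eq_bigr (fun a => s`! * n a)%N) => [|a na]; last first.
  rewrite (prod_fact_decr_at na) mulnA IH //.
  by apply: succn_inj; rewrite -(sum_decr_at na).
rewrite -big_distrr /=.
have -> : (\sum_(a | 0 < n a) n a = s.+1)%N.
  rewrite -sn [RHS](bigID (fun a => 0 < n a)%N) /= [X in (_ + X)%N]big1 ?addn0 //.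
  by move=> a; rewrite -eqn0Ngt => /eqP.
by rewrite factS mulnC.
Qed.

Lemma prod_type_class (R : comPzSemiRingType) (p : nat -> R) s n
    (f : {ffun 'I_s -> 'I_M}) :
  f \in type_class s n -> \prod_(l < s) p (f l) = \prod_(i < M) p i ^+ n i.
Proof.
move=> /forallP fn; rewrite (partition_big f predT) //=; apply: eq_bigr => i _.
rewrite (eq_bigr (fun _ => p i)) => [|l /eqP -> //].
by rewrite prodr_const -(eqP (fn i)); congr (_ ^+ _).
Qed.

Lemma sum_type_class (R : numFieldType) (p : nat -> R) s n : (\sum_i n i)%N = s ->
  \sum_(f in type_class s n) \prod_(l < s) p (f l)
  = s`!%:R / (\prod_i (n i)`!)%:R * \prod_(i < M) p i ^+ n i.
Proof.
move=> sn; rewrite (eq_bigr _ (fun f => @prod_type_class R p s n f)) sumr_const.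
rewrite -(card_type_class sn) natrM mulfK ?mulr_natl //.
by rewrite pnatr_eq0 -lt0n prodn_gt0 // => i; rewrite fact_gt0.
Qed.

End word_sequences.

Section prefixes.
Context (T : Type) (M : nat).

Definition prefix s (v : nat -> T -> 'I_M) (x : T) : {ffun 'I_s -> 'I_M} :=
  [ffun l : 'I_s => v l x].

Definition cylinder s (v : nat -> T -> 'I_M) (f : {ffun 'I_s -> 'I_M}) : set T :=
  [set x | prefix s v x = f].

Lemma cylinderE s v (f : {ffun 'I_s -> 'I_M}) :
  cylinder v f = [set x | forall l : 'I_s, v l x = f l].
Proof.
apply/seteqP; split => x /= h; first by move=> l; rewrite -h ffunE.
by apply/ffunP => l; rewrite ffunE h.
Qed.

Lemma prefix_preimage s v (Q : pred {ffun 'I_s -> 'I_M}) :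
  [set x | Q (prefix s v x)] = \bigcup_(f in [set f | Q f]) cylinder v f.
Proof. by apply/seteqP; split => x /=; [exists (prefix s v x) | case=> f Qf ->]. Qed.

Lemma trivIset_cylinder s v (D : set {ffun 'I_s -> 'I_M}) :
  trivIset D (cylinder v).
Proof. by move=> f g _ _ [x [<- <-]]. Qed.

Lemma ecount_prefix s v x j : ecount v s x j = occurrences (prefix s v x) j.
Proof.
rewrite /ecount /wcount /occurrences cardE /enum_mem -enumT size_filter.
rewrite -val_enum_ord count_map; apply: eq_count => l /=.
by rewrite !inE ffunE.
Qed.

End prefixes.

Section count_vectors.
Context (T : Type) (M t : nat) (w : nat -> T -> 'I_M).

Lemma fnatE (n : {ffun 'I_M -> 'I_t.+1}) (i : 'I_M) : fnat n i = n i.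
Proof. by rewrite /fnat (nth_map i) ?size_enum_ord // nth_ord_enum. Qed.

Lemma countevE (n : {ffun 'I_M -> 'I_t.+1}) :
  countev w n = [set x | prefix t w x \in type_class t (fun i => n i)].
Proof.
apply/seteqP; split => x /=; rewrite inE.
  by move=> h; apply/forallP => i; rewrite -ecount_prefix h.
by move=> /forallP h i; rewrite ecount_prefix (eqP (h i)).
Qed.

Lemma countev_inj (n n' : {ffun 'I_M -> 'I_t.+1}) x :
  countev w n x -> countev w n' x -> n = n'.
Proof. by move=> h h'; apply/ffunP => i; apply: val_inj; rewrite /= -h -h'. Qed.

Lemma countev_cover x :
  exists2 n : {ffun 'I_M -> 'I_t.+1}, (\sum_i n i == t)%N & countev w n x.
Proof.
have ecount_le i : (ecount w t x i < t.+1)%N.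
  by rewrite ltnS ecount_prefix -[t in (_ <= t)%N]card_ord max_card.
exists [ffun i : 'I_M => inord (ecount w t x i)].
  apply/eqP; rewrite -[t in RHS](sum_occurrences (prefix t w x)).
  by apply: eq_bigr => i _; rewrite ffunE inordK // ecount_prefix.
by move=> i; rewrite ffunE inordK.
Qed.

Lemma stable_countev (n : {ffun 'I_M -> 'I_t.+1}) x :
  countev w n x -> stable M (ecount w t x) = stable M (fnat n).
Proof.
move=> h; apply: eq_in_all => j; rewrite mem_iota add0n => /andP[_ jM].
have jM1 : (j.+1 < M)%N by rewrite -ltn_predRL.
by rewrite (fnatE n (Ordinal jM1)) (fnatE n (Ordinal (ltnW jM1))) -!h.
Qed.

Lemma unstable_bigcup (E : set T) :
  [set x | ~~ stable M (ecount w t x) \/ E x] =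
  \bigcup_(n in [set n : {ffun 'I_M -> 'I_t.+1} | (\sum_i n i == t)%N])
     (if stable M (fnat n) then E `&` countev w n else countev w n).
Proof.
apply/seteqP; split => x /=.
  move=> unstable_x; have [n tn xn] := countev_cover x.
  exists n => //; move: unstable_x; rewrite (stable_countev xn).
  by case: ifP => // _ [].
move=> [n _]; case: ifP => [_ [Ex _]|sn xn]; first by right.
by left; rewrite (stable_countev xn) sn.
Qed.

End count_vectors.

Section measurability.
Context d (T : measurableType d) (M : nat).

Lemma measurable_cylinder (v : nat -> T -> 'I_M)
    (mv : forall k i, measurable (v k @^-1` [set i])) s (f : {ffun 'I_s -> 'I_M}) :
  measurable (cylinder v f).
Proof.
have -> : cylinder v f = \bigcap_(l in [set: 'I_s]) (v l @^-1` [set f l]).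
  by rewrite cylinderE; apply/seteqP; split => x /= h l; [move=> _|]; apply: h.
by apply: fin_bigcap_measurable => // l _; apply: mv.
Qed.

Lemma measurable_prefix_preimage (v : nat -> T -> 'I_M)
    (mv : forall k i, measurable (v k @^-1` [set i])) s (Q : pred {ffun 'I_s -> 'I_M}) :
  measurable [set x | Q (prefix s v x)].
Proof.
rewrite prefix_preimage; apply: fin_bigcup_measurable; first exact: finite_finset.
by move=> f _; apply: measurable_cylinder.
Qed.

Lemma measurable_recurrence (w wd : nat -> T -> 'I_M)
    (mw : forall k i, measurable (w k @^-1` [set i]))
    (mwd : forall k i, measurable (wd k @^-1` [set i])) t :
  measurable (recurrence w wd t).
Proof.
pose tied s j (f : {ffun 'I_s -> 'I_M}) := occurrences f j == occurrences f j.+1.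
have -> : recurrence w wd t = \bigcup_(s in [set s | t < s]%N)
    \bigcup_(j in [set j | j.+1 < M]%N)
      ([set x | tied s j (prefix s w x)] `|` [set x | tied s j (prefix s wd x)]).
  apply/seteqP; split => x /=.
    case=> s [ts [j [jM eq_counts]]]; exists s => //; exists j => //.
    rewrite /tied /= -!ecount_prefix.
    by case: eq_counts => ->; rewrite eqxx; [left|right].
  case=> s ts [j jM eq_counts]; exists s; split => //; exists j; split => //.
  by rewrite !ecount_prefix; case: eq_counts => /eqP ->; [left|right].
apply: bigcup_measurable => s _; apply: bigcup_measurable => j _.
by apply: measurableU; [exact (measurable_prefix_preimage mw (tied s j))
                       | exact (measurable_prefix_preimage mwd (tied s j))].
Qed.

End measurability.

Lemma measure_bigcup_finType d (T : measurableType d) (R : realFieldType)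
    (mu : {measure set T -> \bar R}) (I : finType) (Q : pred I) (F : I -> set T) :
  (forall i, Q i -> measurable (F i)) -> trivIset [set i | Q i] F ->
  mu (\bigcup_(i in [set i | Q i]) F i) = (\sum_(i | Q i) mu (F i))%E.
Proof.
move=> mF tF; rewrite measure_fin_bigcup //; last exact: finite_finset.
rewrite (fsbigE [seq i <- enum I | Q i]) ?filter_uniq ?enum_uniq //.
- rewrite big_filter_cond big_enum_cond.
  by apply: eq_bigl => i; rewrite mem_setE andbb.
- by rewrite -enumT enum_uniq.
- by move=> i /=; rewrite mem_filter => /andP[].
- by move=> i /= Qi; rewrite mem_filter mem_enum Qi.
Qed.

Section word_law.
Context d (T : measurableType d) (R : realFieldType) (mu : {measure set T -> \bar R}).
Context (M : nat) (p : nat -> R) (v : nat -> T -> 'I_M).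
Hypothesis mv : forall k i, measurable (v k @^-1` [set i]).
Hypothesis mu_cylinder : forall k (f : 'I_k -> 'I_M),
  mu [set x | forall l : 'I_k, v l x = f l] = (\prod_(l < k) p (f l))%:E.

Lemma measure_type_class s (n : 'I_M -> nat) : (\sum_i n i)%N = s ->
  mu [set x | prefix s v x \in type_class s n]
  = (s`!%:R / (\prod_i (n i)`!)%:R * \prod_(i < M) p i ^+ n i)%:E.
Proof.
move=> sn; rewrite prefix_preimage measure_bigcup_finType; last 2 first.
- by move=> f _; apply: measurable_cylinder.
- exact: trivIset_cylinder.
rewrite (eq_bigr (fun f : {ffun 'I_s -> 'I_M} => (\prod_(l < s) p (f l))%:E)).
  by rewrite sumEFin sum_type_class.
by move=> f _; rewrite cylinderE mu_cylinder.
Qed.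

Lemma measure_countev t (n : {ffun 'I_M -> 'I_t.+1}) : (\sum_i n i == t)%N ->
  mu (countev v n) = (multprob p n)%:E.
Proof. by move=> /eqP tn; rewrite countevE measure_type_class. Qed.

End word_law.

Theorem theorem3 (R : realType) (d : measure_display) (T : measurableType d)
  (P : probability T R) (m : nat) (p : nat -> R) (rho : R)
  (c : 'I_(2 ^ m) -> m.-tuple bool) (w wd : nat -> T -> 'I_(2 ^ m)) (t : nat) :
  (1 <= m)%N ->
  0 <= rho <= 1 ->
  injective c ->
  (forall i j : 'I_(2 ^ m), (i <= j)%N -> (cost (c i) <= cost (c j))%N) ->
  (forall j, (j.+1 < 2 ^ m)%N -> p j.+1 <= p j) ->
  (forall j, (j < 2 ^ m)%N -> 0 < p j) ->
  (forall j, (j.+1 < 2 ^ m)%N -> Pdec rho c p j.+1 <= Pdec rho c p j) ->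
  (forall j, (j < 2 ^ m)%N -> 0 < Pdec rho c p j) ->
  (forall k i, measurable (w k @^-1` [set i])) ->
  (forall k i, measurable (wd k @^-1` [set i])) ->
  (forall (k : nat) (s : 'I_k -> 'I_(2 ^ m)),
     P [set x | forall l : 'I_k, w l x = s l] = (\prod_(l < k) p (s l))%:E) ->
  (forall k x, (k < t)%N -> wd k x = w k x) ->
  (forall n : {ffun 'I_(2 ^ m) -> 'I_t.+1}, stable (2 ^ m) (fnat n) ->
     (P (recurrence w wd t `&` countev w n)
       <= (Abound m p (Pdec rho c p) (fnat n))%:E * P (countev w n))%E) ->
  (P [set x | ~~ stable (2 ^ m) (ecount w t x) \/ recurrence w wd t x]
    <= (\sum_(n : {ffun 'I_(2 ^ m) -> 'I_t.+1}
              | ((\sum_(i < 2 ^ m) nat_of_ord (n i))%N == t) && stable (2 ^ m) (fnat n))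
           Abound m p (Pdec rho c p) (fnat n) * multprob p n
        + \sum_(n : {ffun 'I_(2 ^ m) -> 'I_t.+1}
              | ((\sum_(i < 2 ^ m) nat_of_ord (n i))%N == t) && ~~ stable (2 ^ m) (fnat n))
           multprob p n)%:E)%E.
Proof.
move=> _ _ _ _ _ _ _ _ mw mwd P_cylinder _ recurrence_bound.
have m_countev n : measurable (countev w n).
  by rewrite countevE; apply: measurable_prefix_preimage.
have countev_piece n :
    (if stable (2 ^ m) (fnat n) then recurrence w wd t `&` countev w n
     else countev w n) `<=` countev w n.
  by case: ifP => _ x // [].
rewrite unstable_bigcup measure_bigcup_finType; first last.
- move=> n n' _ _ [x [/countev_piece xn /countev_piece xn']].
  exact: countev_inj xn xn'.
- move=> n _; case: ifP => _; last exact: m_countev.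
  by apply: measurableI; [exact: measurable_recurrence | exact: m_countev].
rewrite (bigID (fun n => stable (2 ^ m) (fnat n))) /= EFinD -!sumEFin.
apply: leeD; apply: lee_sum => n /andP[tn sn]; rewrite ?sn ?(negbTE sn).
- apply: le_trans (recurrence_bound n sn) _.
  (* [P] is a probability here but a measure in [measure_countev]: the two
     terms are convertible, not syntactically equal, so rewrite cannot see it. *)
  have Pn : P (countev w n) = (multprob p n)%:E := measure_countev mw P_cylinder tn.
  by rewrite Pn EFinM.
- by rewrite (measure_countev mw P_cylinder tn).
Qed.
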